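(* Let $\mathcal{S}$ (universe $S$) be the direct limit of a family of substructures $\{\mathcal{S}_i\}_{i\in I}$ (universes $S_i$). Suppose that for every finite set $\{a_0,\ldots,a_n\}\subseteq S$ there is $i\in I$ with $a_0,\ldots,a_n\in S_i$ such that for every $j\ge i$ there exists an isomorphism $f:\mathcal{S}\to\mathcal{S}_j$ with $f(a_l)=a_l$ for $l=0,\ldots,n$. Then $\lim_I\mathrm{Th}(\mathcal{S}_i^* )=\mathrm{Th}(\mathcal{S}^* )$.
   Context: A $\sigma$-structure $\mathcal{S}$ with universe $S$ is the direct limit of a family $\{\mathcal{S}_i\}_{i\in I}$ of substructures if $S=\bigcup_{i\in I}S_i$ and $I$ is partially ordered by $i\le j\iff S_i\subseteq S_j$, this order being directed. $\mathrm{Th}(\mathcal{T}^* )$ is the set of sentences over $\sigma$ expanded by a constant for each element of the universe of $\mathcal{T}$ that are true in $\mathcal{T}$; for substructures of $\mathcal{S}$ these are regarded as subsets of the set of sentences over $\sigma$ expanded by constants for all elements of $S$. For a family $\{\Delta_i\}_{i\in I}$: $\limsup_I \Delta_i=\{\theta: \forall i\ \exists j\ge i\ [\theta\in\Delta_j]\}$, $\liminf_I \Delta_i=\{\theta: \exists i\ \forall j\ge i\ [\theta\in\Delta_j]\}$, and $\lim_I\Delta_i=\Delta$ means both equal $\Delta$. *)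

From mathcomp Require Import all_boot.
Set Implicit Arguments. Unset Strict Implicit. Unset Printing Implicit Defensive.

Record signature := Signature {
  func : Type; fun_ar : func -> nat;
  rel : Type;  rel_ar : rel -> nat }.

Record structure (L : signature) := Structure {
  carrier :> Type;
  fint : forall f : func L, ('I_(fun_ar f) -> carrier) -> carrier;
  rint : forall r : rel L, ('I_(rel_ar r) -> carrier) -> Prop }.

(* Terms / formulas over sigma expanded by a constant (tpar a) for each
   element a of M; variables are natural numbers. *)
Inductive term (L : signature) (M : Type) : Type :=
| tvar : nat -> term L M
| tpar : M -> term L M
| tapp : forall f : func L, ('I_(fun_ar f) -> term L M) -> term L M.

Inductive formula (L : signature) (M : Type) : Type :=
| feq : term L M -> term L M -> formula L M
| frel : forall r : rel L, ('I_(rel_ar r) -> term L M) -> formula L M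
| fnot : formula L M -> formula L M
| fand : formula L M -> formula L M -> formula L M
| f_or : formula L M -> formula L M -> formula L M
| fimp : formula L M -> formula L M -> formula L M
| fall : nat -> formula L M -> formula L M
| fex : nat -> formula L M -> formula L M.

Arguments tvar {L M}. Arguments tpar {L M}.

Definition upd (M : Type) (e : nat -> M) (x : nat) (a : M) : nat -> M :=
  fun y => if y == x then a else e y.

Fixpoint teval L (S : structure L) (e : nat -> S) (t : term L S) : S :=
  match t with
  | tvar n => e n
  | tpar a => a
  | tapp f args => fint (fun i => teval e (args i))
  end.

(* Satisfaction in the substructure with universe U (quantifiers range
   over U; functions and relations are the restrictions of those of S). *)
Fixpoint sat L (S : structure L) (U : S -> Prop) (e : nat -> S)
    (phi : formula L S) : Prop :=
  match phi with
  | feq t1 t2 => teval e t1 = teval e t2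
  | frel r args => rint (fun i => teval e (args i))
  | fnot p => ~ sat U e p
  | fand p q => sat U e p /\ sat U e q
  | f_or p q => sat U e p \/ sat U e q
  | fimp p q => sat U e p -> sat U e q
  | fall x p => forall a, U a -> sat U (upd e x a) p
  | fex x p => exists a, U a /\ sat U (upd e x a) p
  end.

Fixpoint term_vars_in L M (P : nat -> Prop) (t : term L M) : Prop :=
  match t with
  | tvar n => P n
  | tpar _ => True
  | tapp f args => forall i, term_vars_in P (args i)
  end.

Fixpoint term_params_in L M (U : M -> Prop) (t : term L M) : Prop :=
  match t with
  | tvar _ => True
  | tpar a => U a
  | tapp f args => forall i, term_params_in U (args i)
  end.

Fixpoint fvars_in L M (P : nat -> Prop) (phi : formula L M) : Prop :=
  match phi with
  | feq t1 t2 => term_vars_in P t1 /\ term_vars_in P t2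
  | frel r args => forall i, term_vars_in P (args i)
  | fnot p => fvars_in P p
  | fand p q | f_or p q | fimp p q => fvars_in P p /\ fvars_in P q
  | fall x p | fex x p => fvars_in (fun y => y = x \/ P y) p
  end.

Fixpoint params_in L M (U : M -> Prop) (phi : formula L M) : Prop :=
  match phi with
  | feq t1 t2 => term_params_in U t1 /\ term_params_in U t2
  | frel r args => forall i, term_params_in U (args i)
  | fnot p => params_in U p
  | fand p q | f_or p q | fimp p q => params_in U p /\ params_in U q
  | fall _ p | fex _ p => params_in U p
  end.

Definition sentence L M (phi : formula L M) : Prop :=
  fvars_in (fun _ => False) phi.

(* Th(T^* ) for the substructure T of S with universe U: sentences with
   constants only for elements of U, true in T. *)
Definition Th_sub L (S : structure L) (U : S -> Prop) : formula L S -> Prop :=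
  fun phi => sentence phi /\ params_in U phi /\
             forall e : nat -> S, (forall n, U (e n)) -> sat U e phi.
Arguments Th_sub {L} S U.

Definition Th L (S : structure L) : formula L S -> Prop :=
  Th_sub S (fun _ => True).
Arguments Th {L} S.

Definition is_substructure L (S : structure L) (U : S -> Prop) : Prop :=
  (exists a, U a) /\
  forall (f : func L) (args : 'I_(fun_ar f) -> S),
    (forall i, U (args i)) -> U (fint args).
Arguments is_substructure {L} S U.

Definition idx_le (X : Type) (I : Type) (U : I -> X -> Prop) (i j : I) : Prop :=
  forall x, U i x -> U j x.

Definition direct_limit L (S : structure L) (I : Type) (U : I -> S -> Prop) :
    Prop :=
  (forall i, is_substructure S (U i)) /\
  (forall x : S, exists i, U i x) /\
  (forall i j, idx_le U i j -> idx_le U j i -> i = j) /\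
  inhabited I /\
  (forall i j, exists k, idx_le U i k /\ idx_le U j k).
Arguments direct_limit {L} S {I} U.

Definition is_iso_onto L (S : structure L) (V : S -> Prop) (f : S -> S) : Prop :=
  (forall x, V (f x)) /\
  (forall x y, f x = f y -> x = y) /\
  (forall y, V y -> exists x, f x = y) /\
  (forall (g : func L) (args : 'I_(fun_ar g) -> S),
      f (fint args) = fint (fun i => f (args i))) /\
  (forall (r : rel L) (args : 'I_(rel_ar r) -> S),
      rint args <-> rint (fun i => f (args i))).
Arguments is_iso_onto {L} S V f.

Definition limsup (I X : Type) (le : I -> I -> Prop) (D : I -> X -> Prop) :
    X -> Prop := fun th => forall i, exists j, le i j /\ D j th.

Definition liminf (I X : Type) (le : I -> I -> Prop) (D : I -> X -> Prop) :
    X -> Prop := fun th => exists i, forall j, le i j -> D j th.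

Definition lim_is (I X : Type) (le : I -> I -> Prop) (D : I -> X -> Prop)
    (Delta : X -> Prop) : Prop :=
  (forall th, limsup le D th <-> Delta th) /\
  (forall th, liminf le D th <-> Delta th).

(* Every formula mentions only finitely many parameters a_0, ..., a_n.  By
   hypothesis there is an index i beyond which each S_j is the image of S under
   an isomorphism fixing the a_l; isomorphisms preserve satisfaction, so for
   j >= i the formula lies in Th(S_j^* ) exactly when it lies in Th(S^* ).  A
   family that eventually agrees with Th(S^* ) along a directed index set has
   Th(S^* ) as its limit. *)
From Pilot Require Import Defs.
From mathcomp Require Import all_boot.
From Stdlib Require List.
From Stdlib Require Import ClassicalEpsilon FunctionalExtensionality.

Set Implicit Arguments. Unset Strict Implicit.

Lemma lim_is_eventually (I X : Type) (le : I -> I -> Prop)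
    (D : I -> X -> Prop) (Delta : X -> Prop) :
  (forall i j, exists k, le i k /\ le j k) ->
  (forall th, exists i, forall j, le i j -> (D j th <-> Delta th)) ->
  lim_is le D Delta.
Proof.
move=> le_directed eventually_D; split=> th; have [i0 Hi0] := eventually_D th.
- split=> [Hsup | Dth i].
  + by have [j [i0j Dj]] := Hsup i0; apply/(Hi0 j).
  + have [k [ik i0k]] := le_directed i i0.
    by exists k; split; last exact/(Hi0 k).
- split=> [[i Hinf] | Dth]; last by exists i0 => j i0j; apply/(Hi0 j).
  have [k [ik i0k]] := le_directed i i0.
  by apply/(Hi0 k) => //; apply: Hinf.
Qed.

Lemma In_enum (n : nat) (i : 'I_n) : List.In i (enum 'I_n).
Proof.
have : i \in enum 'I_n by rewrite mem_enum.
elim: (enum 'I_n) => [|j s IH] //.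
by rewrite in_cons => /orP[/eqP ->|/IH]; [left|right].
Qed.

Section FormulaParams.
Variables (L : signature) (M : Type).

Fixpoint term_params (t : term L M) : seq M :=
  match t with
  | tvar _ => [::]
  | tpar a => [:: a]
  | tapp f args => List.flat_map (fun i => term_params (args i)) (enum 'I_(fun_ar f))
  end.

Fixpoint formula_params (phi : formula L M) : seq M :=
  match phi with
  | feq t1 t2 => term_params t1 ++ term_params t2
  | Defs.frel r args => List.flat_map (fun i => term_params (args i)) (enum 'I_(rel_ar r))
  | fnot p | fall _ p | fex _ p => formula_params p
  | fand p q | f_or p q | fimp p q => formula_params p ++ formula_params q
  end.

Lemma term_params_in_sub (P Q : M -> Prop) (t : term L M) :
  (forall b, P b -> Q b) -> term_params_in P t -> term_params_in Q t.
Proof.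
move=> PQ; elim: t => [n|a|f args IH] //=; first exact: PQ.
by move=> Pargs i; apply: IH.
Qed.

Lemma params_in_sub (P Q : M -> Prop) (phi : formula L M) :
  (forall b, P b -> Q b) -> params_in P phi -> params_in Q phi.
Proof.
move=> PQ; have Tsub := term_params_in_sub PQ.
elim: phi => //= [t1 t2 [] | r args Pargs i | p Hp q Hq [] | p Hp q Hq [] | p Hp q Hq []];
  by auto.
Qed.

Lemma term_params_inE (t : term L M) :
  term_params_in (fun b => List.In b (term_params t)) t.
Proof.
elim: t => [n|a|f args IH] //=; first by left.
move=> i; apply: term_params_in_sub (IH i) => b b_args_i.
by apply/List.in_flat_map; exists i; split; first exact: In_enum.
Qed.

Lemma params_inE (phi : formula L M) :
  params_in (fun b => List.In b (formula_params phi)) phi.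
Proof.
have In_appl (s1 s2 : seq M) b : List.In b s1 -> List.In b (s1 ++ s2).
  by move=> ?; apply: List.in_or_app; left.
have In_appr (s1 s2 : seq M) b : List.In b s2 -> List.In b (s1 ++ s2).
  by move=> ?; apply: List.in_or_app; right.
elim: phi => //= [t1 t2 | r args i | p Hp q Hq | p Hp q Hq | p Hp q Hq].
- by split; apply: term_params_in_sub (term_params_inE _) => b; auto.
- apply: term_params_in_sub (term_params_inE (args i)) => b b_args_i.
  by apply/List.in_flat_map; exists i; split; first exact: In_enum.
all: by split; [apply: params_in_sub Hp | apply: params_in_sub Hq] => b; auto.
Qed.

Lemma params_in_finite (d : M) (phi : formula L M) :
  exists n (a : nat -> M), params_in (fun b => exists l, l <= n /\ a l = b) phi.
Proof.
exists (size (formula_params phi)), (fun l => List.nth l (formula_params phi) d).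
apply: params_in_sub (params_inE phi) => b /(List.In_nth _ _ d) [l [/ltP lt_l <-]].
by exists l; split; first exact: ltnW.
Qed.

Fixpoint map_term (f : M -> M) (t : term L M) : term L M :=
  match t with
  | tvar n => tvar n
  | tpar a => tpar (f a)
  | tapp g args => tapp (fun i => map_term f (args i))
  end.

Fixpoint map_formula (f : M -> M) (phi : formula L M) : formula L M :=
  match phi with
  | feq t1 t2 => feq (map_term f t1) (map_term f t2)
  | Defs.frel r args => Defs.frel (fun i => map_term f (args i))
  | fnot p => fnot (map_formula f p)
  | fand p q => fand (map_formula f p) (map_formula f q)
  | f_or p q => f_or (map_formula f p) (map_formula f q)
  | fimp p q => fimp (map_formula f p) (map_formula f q)
  | fall x p => fall x (map_formula f p)
  | fex x p => fex x (map_formula f p)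
  end.

Lemma map_term_id_in (f : M -> M) (t : term L M) :
  term_params_in (fun b => f b = b) t -> map_term f t = t.
Proof.
elim: t => [n|a|g args IH] //= => [-> // | fix_args].
by congr tapp; apply: functional_extensionality => i; apply: IH.
Qed.

Lemma map_formula_id_in (f : M -> M) (phi : formula L M) :
  params_in (fun b => f b = b) phi -> map_formula f phi = phi.
Proof.
elim: phi => /= [t1 t2 [] | r args fix_args | p IH | p Hp q Hq [] | p Hp q Hq []
                | p Hp q Hq [] | x p IH | x p IH];
  try by move=> *; rewrite ?map_term_id_in ?IH ?Hp ?Hq.
by congr Defs.frel; apply: functional_extensionality => i; apply: map_term_id_in.
Qed.

End FormulaParams.

Section Isomorphism.
Variables (L : signature) (S : structure L) (V : S -> Prop) (f : S -> S).
Hypothesis f_iso : is_iso_onto S V f.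

Lemma teval_iso (e e' : nat -> S) (t : term L S) :
  (forall n, f (e n) = e' n) -> f (teval e t) = teval e' (map_term f t).
Proof.
have [_ [_ [_ [f_fint _]]]] := f_iso.
move=> ee'; elim: t => [n|a|g args IH] //=.
by rewrite f_fint; congr fint; apply: functional_extensionality => i; apply: IH.
Qed.

Lemma upd_iso (e e' : nat -> S) x a :
  (forall n, f (e n) = e' n) -> forall n, f (upd e x a n) = upd e' x (f a) n.
Proof. by move=> ee' n; rewrite /upd; case: (n == x). Qed.

Lemma sat_iso (phi : formula L S) (e e' : nat -> S) :
  (forall n, f (e n) = e' n) ->
  (sat (fun _ => True) e phi <-> sat V e' (map_formula f phi)).
Proof.
have [f_V [f_inj [f_onto [_ f_rint]]]] := f_iso.
elim: phi e e' => /= [t1 t2 | r args | p IH | p Hp q Hq | p Hp q Hq | p Hp q Hq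
                     | x p IH | x p IH] e e' ee'.
- rewrite -!(teval_iso _ ee'); split=> [-> // | ]; exact: f_inj.
- rewrite f_rint; suff -> : (fun i => f (teval e (args i)))
                           = (fun i => teval e' (map_term f (args i))) by [].
  by apply: functional_extensionality => i; apply: teval_iso.
- by rewrite (IH e e' ee').
- by rewrite (Hp e e' ee') (Hq e e' ee').
- by rewrite (Hp e e' ee') (Hq e e' ee').
- by rewrite (Hp e e' ee') (Hq e e' ee').
- split=> [Hall b Vb | Hall a _].
  + by have [a <-] := f_onto b Vb; apply/(IH _ _ (upd_iso x a ee'))/Hall.
  + by apply/(IH _ _ (upd_iso x a ee'))/Hall/f_V.
- split=> [[a [_ Ha]] | [b [Vb Hb]]].
  + by exists (f a); split; [exact: f_V | apply/(IH _ _ (upd_iso x a ee'))].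
  + have [a fab] := f_onto b Vb; exists a; split=> //.
    by apply/(IH _ _ (upd_iso x a ee')); rewrite fab.
Qed.

Lemma Th_sub_iso (phi : formula L S) :
  params_in (fun b => f b = b) phi -> params_in V phi ->
  (Th_sub S V phi <-> Th S phi).
Proof.
move=> fix_phi V_phi; have map_phi := map_formula_id_in fix_phi.
have [f_V [_ [f_onto _]]] := f_iso.
have T_phi : params_in (fun _ => True) phi by apply: params_in_sub V_phi.
rewrite /Th /Th_sub; split=> -[sent_phi [_ sat_phi]]; do 2!split=> //.
- move=> e _; apply/(sat_iso phi (e' := fun n => f (e n))) => //.
  by rewrite map_phi; apply: sat_phi.
- move=> e' Ve'; have [e ee'] : exists e : nat -> S, forall n, f (e n) = e' n.
    exists (fun n => proj1_sig (constructive_indefinite_description _ (f_onto _ (Ve' n)))).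
    by move=> n; case: constructive_indefinite_description.
  by rewrite -map_phi; apply/(sat_iso phi ee')/sat_phi.
Qed.

End Isomorphism.

Lemma Th_sub_eventually_Th (L : signature) (S : structure L) (I : Type)
    (U : I -> S -> Prop) (d : S) (phi : formula L S) :
  (forall (n : nat) (a : nat -> S),
     exists i : I,
       (forall l, l <= n -> U i (a l)) /\
       forall j : I, idx_le U i j ->
         exists f : S -> S, is_iso_onto S (U j) f /\
                            (forall l, l <= n -> f (a l) = a l)) ->
  exists i, forall j, idx_le U i j -> (Th_sub S (U j) phi <-> Th S phi).
Proof.
move=> homogeneous; have [n [a a_phi]] := params_in_finite d phi.
have [i [Ui_a iso_fixing_a]] := homogeneous n a; exists i => j ij.
have [f [f_iso f_fixes_a]] := iso_fixing_a j ij.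
apply: (Th_sub_iso f_iso).
- by apply: params_in_sub a_phi => _ [l [le_ln <-]]; apply: f_fixes_a.
- by apply: params_in_sub a_phi => _ [l [le_ln <-]]; apply/ij/Ui_a.
Qed.

Theorem proposition3p7 (L : signature) (S : structure L) (I : Type)
    (U : I -> S -> Prop) :
  direct_limit S U ->
  (forall (n : nat) (a : nat -> S),
     exists i : I,
       (forall l, l <= n -> U i (a l)) /\
       forall j : I, idx_le U i j ->
         exists f : S -> S, is_iso_onto S (U j) f /\
                            (forall l, l <= n -> f (a l) = a l)) ->
  lim_is (idx_le U) (fun i => Th_sub S (U i)) (Th S).
Proof.
move=> [U_sub [_ [_ [[i0] U_directed]]]] homogeneous.
have [d _] := (U_sub i0).1.
apply: lim_is_eventually U_directed _ => phi.
exact: Th_sub_eventually_Th d phi homogeneous.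
Qed.
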